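(* Let $X$ have a pdf $f$ satisfying Conditions (A) and (B) below. For $\delta>0$ let $D_\delta=D(Q_{\mathrm{uni}}^\delta)$ be the mean-squared distortion of the uniform quantizer with cell size $\delta$. Then $$\lim_{\delta\to 0}\Big[\mathrm{AoI}(S_{\mathrm z},Q_{\mathrm{uni}}^\delta,F^* )-\inf_{S}\ \inf_{Q:\,D(Q)\le D_\delta}\ \mathrm{AoI}(S,Q,F^* )\Big]=0,$$ where the outer infimum is over all stationary deterministic sampling policies $S$ and the inner one is over all quantizers $Q$ with $D(Q)\le D_\delta$. In words: as the distortion tends to $0$, zero-wait sampling, uniform quantization and the real-valued AoI-optimal code together asymptotically achieve the optimal AoI of the joint sampling–quantization–coding problem.
   Context: Let $X$ be a real random variable with pdf $f$. Condition (A): $f$ is continuous and differentiable, and its support is a bounded interval $I$. Let $M=\max f$. Condition (B): the integrals $\int_I f(x)\log_2^2 f(x)\,dx$ and $h(X)=-\int_I f(x)\log_2 f(x)\,dx$ exist and are finite. Quantizers. A quantizer $Q$ partitions $I$ into consecutive intervals $[a_{i-1},a_i]$. Each interval has a representation point $c_i$, and $Q(X)=c_i$ when $X$ lies in the $i$-th cell. Write $p_i=P(X\in[a_{i-1},a_i])$. The output entropy is $H[Q(X)]=-\sum_i p_i\log_2 p_i$, and the mean-squared distortion is $D(Q)=\sum_i\int_{a_{i-1}}^{a_i}(x-c_i)^2f(x)\,dx$. The uniform quantizer $Q_{\mathrm{uni}}^\delta$ partitions $I$ into consecutive cells of length $\delta$, with representation points at the cell midpoints. Codes. A real-valued code for $Q$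 assigns a length $l_i\in\mathbb R^+$ to each cell, subject to the Kraft inequality $\sum_i 2^{-l_i}\le1$. The random codeword length is $L=l_i$ when $X$ is in cell $i$. Sampling policies. A stationary deterministic sampling policy $S$ is given by a measurable function $z:[0,\infty)\to[0,W]$, for some fixed $W$, which determines the waiting time $Z=z(L)\ge0$. The zero-wait policy $S_{\mathrm z}$ has $z\equiv0$. Objective. The AoI of $(S,Q,l)$ is $\mathrm{AoI}(S,Q,l)=\frac{E[(L+Z)^2]}{2E[L+Z]}+E[L]$. The real-valued AoI-optimal code $F^*$ attains the infimum over codes, and we write $\mathrm{AoI}(S,Q,F^* )=\inf_l \mathrm{AoI}(S,Q,l)$, the infimum being over real-valued codes for $Q$. *)

From Stdlib Require Import Reals.
From Coquelicot Require Import Coquelicot.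
Open Scope R_scope.

Fixpoint fsum (N : nat) (g : nat -> R) : R :=
  match N with
  | O => 0
  | S n => fsum n g + g n
  end.

Definition log2 (x : R) : R := ln x / ln 2.

(* f is a pdf whose support (closure of {f > 0}) is the bounded interval [a,b] *)
Definition is_pdf_on (f : R -> R) (a b : R) : Prop :=
  a < b /\
  (forall x, 0 <= f x) /\
  (forall x, (x < a \/ b < x) -> f x = 0) /\
  (forall x y, a <= x -> x < y -> y <= b -> exists z, x < z < y /\ 0 < f z) /\
  ex_RInt f a b /\ RInt f a b = 1.

Definition condA (f : R -> R) (a b : R) : Prop :=
  is_pdf_on f a b /\
  (forall x, a <= x <= b ->
     filterlim f (within (fun y => a <= y <= b) (locally x)) (locally (f x))) /\
  (forall x, a < x < b -> ex_derive f x).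

Definition condB (f : R -> R) (a b : R) : Prop :=
  ex_RInt (fun x => f x * (log2 (f x)) ^ 2) a b /\
  ex_RInt (fun x => f x * log2 (f x)) a b.

(* N cells [qa i, qa (i+1)], i < N, representation points qc i *)
Record quantizer := mkQuantizer {
  qN : nat;
  qa : nat -> R;
  qc : nat -> R
}.

Definition valid_quantizer (a b : R) (Q : quantizer) : Prop :=
  (1 <= qN Q)%nat /\ qa Q 0 = a /\ qa Q (qN Q) = b /\
  (forall i, (i < qN Q)%nat -> qa Q i < qa Q (S i)).

Definition cell_prob (f : R -> R) (Q : quantizer) (i : nat) : R :=
  RInt f (qa Q i) (qa Q (S i)).

Definition distortion (f : R -> R) (Q : quantizer) : R :=
  fsum (qN Q) (fun i =>
    RInt (fun x => (x - qc Q i) ^ 2 * f x) (qa Q i) (qa Q (S i))).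

(* smallest integer >= x *)
Definition ceil_nat (x : R) : nat := Z.to_nat (- Int_part (- x)).

(* uniform quantizer with cell size delta on [a,b]: cells of length delta
   starting at a (last cell truncated at b), midpoints as representation *)
Definition Q_uni (a b delta : R) : quantizer :=
  mkQuantizer (ceil_nat ((b - a) / delta))
    (fun i => Rmin (a + INR i * delta) b)
    (fun i => (Rmin (a + INR i * delta) b + Rmin (a + INR (S i) * delta) b) / 2).

Definition valid_code (Q : quantizer) (l : nat -> R) : Prop :=
  (forall i, (i < qN Q)%nat -> 0 < l i) /\
  fsum (qN Q) (fun i => Rpower 2 (- l i)) <= 1.

(* stationary deterministic policy: waiting time z(L) in [0,W].
   (Measurability is immaterial: L takes finitely many values.) *)
Definition valid_policy (W : R) (z : R -> R) : Prop :=
  forall x, 0 <= x -> 0 <= z x <= W.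

Definition zero_wait : R -> R := fun _ => 0.

Definition AoI (f : R -> R) (z : R -> R) (Q : quantizer) (l : nat -> R) : R :=
  let p := cell_prob f Q in
  let EL := fsum (qN Q) (fun i => p i * l i) in
  let E1 := fsum (qN Q) (fun i => p i * (l i + z (l i))) in
  let E2 := fsum (qN Q) (fun i => p i * (l i + z (l i)) ^ 2) in
  E2 / (2 * E1) + EL.

(* infimum of a set of reals (bounded below and nonempty in all uses) *)
Definition inf_R (P : R -> Prop) : R := real (Glb_Rbar P).

Definition AoI_opt (f : R -> R) (z : R -> R) (Q : quantizer) : R :=
  inf_R (fun v => exists l, valid_code Q l /\ v = AoI f z Q l).

Definition AoI_joint_opt (f : R -> R) (a b W Dmax : R) : R :=
  inf_R (fun u => exists z, valid_policy W z /\
    u = inf_R (fun v => exists Q, valid_quantizer a b Q /\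
                  distortion f Q <= Dmax /\ v = AoI_opt f z Q)).

From Stdlib Require Import Reals Lra Lia Psatz ZArith.
From Coquelicot Require Import Coquelicot.
Open Scope R_scope.

(* For every sampling policy, quantizer and code, Cauchy-Schwarz
   (E[(L+Z)^2] >= E[L+Z]^2) and Z >= 0 give AoI >= 3/2 E[L], and Kraft's inequality gives
   E[L] >= H(Q) / ln 2; so the joint optimum is at least 3/2 inf {H(Q) | D(Q) <= D_delta} / ln 2.
   Conversely, zero-wait sampling of the uniform quantizer with the Shannon code -log2 p_i
   achieves 3/2 E + K / (2 E) with E = H(Q_uni) / ln 2, where K bounds the variance of the
   codeword lengths uniformly in delta; and E >= -log2 (M delta) tends to infinity.
   It remains that H(Q_uni) - inf {H(Q) | D(Q) <= D_delta} tends to 0.  With h the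
   differential entropy, H(Q_uni) <= h - ln delta + o(1) and D_delta <= delta^2 / 12 (1 + o(1)),
   while every quantizer satisfies H(Q) >= h - 1/2 ln (12 D(Q)) - o(1) as D(Q) -> 0.  This
   lower bound is proved cell by cell with Gibbs' inequality: against the uniform density on
   short cells where f is nearly constant and not small, and against a Cauchy density centred
   at the representation point on the other cells, which carry little mass. *)

Lemma ln_le_sub_1 x : 0 < x -> ln x <= x - 1.
Proof. intros Hx. pose proof (exp_ineq1_le (ln x)) as H. rewrite exp_ln in H; lra. Qed.

Lemma ln_1_plus_le x : 0 <= x -> ln (1 + x) <= x.
Proof. intros Hx. pose proof (ln_le_sub_1 (1 + x)). lra. Qed.

Lemma ln_nonneg x : 1 <= x -> 0 <= ln x.
Proof. intros Hx. rewrite <- ln_1. apply ln_le; lra. Qed.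

Lemma ln_nonpos x : 0 < x -> x <= 1 -> ln x <= 0.
Proof. intros Hx Hx1. rewrite <- ln_1. apply ln_le; lra. Qed.

Lemma ln2_pos : 0 < ln 2.
Proof. pose proof ln_lt_2; lra. Qed.

Lemma gibbs_pointwise y G : 0 <= y -> 0 < G -> y * ln G + y - G <= y * ln y.
Proof.
  intros Hy HG. destruct (Req_dec y 0) as [->|Hy0]; [lra|].
  pose proof (ln_le_sub_1 (G / y) ltac:(apply Rdiv_lt_0_compat; lra)) as H.
  rewrite ln_div in H by lra.
  assert (Hyy : y * (G / y - 1) = G - y) by (field; lra).
  assert (y * (ln G - ln y) <= y * (G / y - 1)) by (apply Rmult_le_compat_l; lra).
  lra.
Qed.

Lemma mul_ln_sq_le t M : 0 < t <= M -> 1 <= M -> t * ln t ^ 2 <= 4 + M * ln M ^ 2.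
Proof.
  intros [Ht HtM] HM. destruct (Rle_dec t 1) as [Ht1|Ht1].
  - (* with u = sqrt t, t ln^2 t = 4 (u ln u)^2 and 0 <= - u ln u <= 1 - u *)
    set (u := sqrt t). assert (Hu : 0 < u) by (apply sqrt_lt_R0; auto).
    assert (Huu : u * u = t) by (apply sqrt_sqrt; lra).
    assert (Hlt : ln t = 2 * ln u) by (rewrite <- Huu, ln_mult; auto; ring).
    assert (Hu1 : u <= 1) by nra.
    pose proof (ln_nonpos u Hu Hu1).
    pose proof (ln_le_sub_1 (/ u) ltac:(apply Rinv_0_lt_compat; auto)) as Hinv.
    rewrite ln_Rinv in Hinv by auto.
    assert (Hx : u * - ln u <= 1 - u).
    { replace (1 - u) with (u * (/ u - 1)) by (field; lra). apply Rmult_le_compat_l; lra. }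
    assert (0 <= M * ln M ^ 2) by (apply Rmult_le_pos; [lra | apply pow2_ge_0]).
    assert (Hv : (u * - ln u) ^ 2 <= 1) by (assert (0 <= u * - ln u) by nra; nra).
    rewrite Hlt, <- Huu. replace (u * u * (2 * ln u) ^ 2) with (4 * (u * - ln u) ^ 2) by ring. lra.
  - pose proof (ln_nonneg t ltac:(lra)). assert (ln t <= ln M) by (apply ln_le; lra).
    assert (t * ln t ^ 2 <= M * ln M ^ 2) by (apply Rmult_le_compat; simpl; nra). lra.
Qed.

Lemma Rpower_2_log2 x : 0 < x -> Rpower 2 (log2 x) = x.
Proof.
  intros Hx. unfold Rpower, log2. pose proof ln2_pos.
  replace (ln x / ln 2 * ln 2) with (ln x) by (field; lra). apply exp_ln, Hx.
Qed.

Lemma fsum_ext N g h : (forall i, (i < N)%nat -> g i = h i) -> fsum N g = fsum N h.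
Proof.
  induction N; simpl; intros H; auto.
  rewrite IHN by (intros; apply H; lia). rewrite H by lia. auto.
Qed.

Lemma fsum_le N g h : (forall i, (i < N)%nat -> g i <= h i) -> fsum N g <= fsum N h.
Proof.
  induction N; simpl; intros H; [lra|].
  assert (fsum N g <= fsum N h) by (apply IHN; intros; apply H; lia).
  specialize (H N ltac:(lia)). lra.
Qed.

Lemma fsum_linear3 N A B C (p q w : nat -> R) :
  fsum N (fun i => A * p i + B * q i + C * w i) = A * fsum N p + B * fsum N q + C * fsum N w.
Proof. induction N; simpl; [lra|]. rewrite IHN. lra. Qed.

Lemma fsum_scal N c g : fsum N (fun i => c * g i) = c * fsum N g.
Proof. induction N; simpl; [lra|]. rewrite IHN. lra. Qed.

Lemma fsum_const N c : fsum N (fun _ => c) = INR N * c.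
Proof. induction N; cbn [fsum]; [simpl; lra|]. rewrite IHN, S_INR. lra. Qed.

Lemma fsum_telescope N g : fsum N (fun i => g (S i) - g i) = g N - g O.
Proof. induction N; simpl; [lra|]. rewrite IHN. lra. Qed.

Lemma fsum_nonneg N g : (forall i, (i < N)%nat -> 0 <= g i) -> 0 <= fsum N g.
Proof. intros H. rewrite <- (Rmult_0_r (INR N)), <- fsum_const. apply fsum_le, H. Qed.

Lemma fsum_pos N g : (1 <= N)%nat -> (forall i, (i < N)%nat -> 0 < g i) -> 0 < fsum N g.
Proof.
  intros HN Hg. destruct N as [|N]; [lia|]. cbn [fsum].
  assert (0 <= fsum N g) by (apply fsum_nonneg; intros; apply Rlt_le, Hg; lia).
  specialize (Hg N ltac:(lia)). lra.
Qed.

Lemma fsum_term_le N g i : (forall j, (j < N)%nat -> 0 <= g j) -> (i < N)%nat -> g i <= fsum N g.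
Proof.
  induction N as [|N IH]; intros Hg Hi; [lia|]. cbn [fsum].
  destruct (Nat.eq_dec i N) as [->|Hne].
  - assert (0 <= fsum N g) by (apply fsum_nonneg; intros; apply Hg; lia). lra.
  - assert (g i <= fsum N g) by (apply IH; [intros; apply Hg|]; lia).
    specialize (Hg N ltac:(lia)). lra.
Qed.

Lemma fsum_weighted_sq_dev N p x c : fsum N p = 1 ->
  fsum N (fun i => p i * (x i - c) ^ 2)
  = fsum N (fun i => p i * x i ^ 2) - 2 * c * fsum N (fun i => p i * x i) + c ^ 2.
Proof.
  intros Hp.
  rewrite (fsum_ext _ _ (fun i => 1 * (p i * x i ^ 2) + (- 2 * c) * (p i * x i) + c ^ 2 * p i))
    by (intros; ring).
  rewrite fsum_linear3, Hp. ring.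
Qed.

Lemma fsum_weighted_sq_le N p x c : fsum N p = 1 ->
  fsum N (fun i => p i * x i ^ 2)
  <= fsum N (fun i => p i * x i) ^ 2 + fsum N (fun i => p i * (x i - c) ^ 2).
Proof.
  intros Hp. rewrite fsum_weighted_sq_dev by auto.
  pose proof (pow2_ge_0 (fsum N (fun i => p i * x i) - c)). nra.
Qed.

Lemma fsum_weighted_mean_sq_le N p x : (forall i, (i < N)%nat -> 0 <= p i) -> fsum N p = 1 ->
  fsum N (fun i => p i * x i) ^ 2 <= fsum N (fun i => p i * x i ^ 2).
Proof.
  intros Hp0 Hp. set (m := fsum N (fun i => p i * x i)).
  assert (0 <= fsum N (fun i => p i * (x i - m) ^ 2))
    by (apply fsum_nonneg; intros; apply Rmult_le_pos; [auto | apply pow2_ge_0]).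
  rewrite fsum_weighted_sq_dev in H by auto. fold m in H. nra.
Qed.

Lemma entropy_le_kraft N p l : (forall i, (i < N)%nat -> 0 < p i) -> fsum N p = 1 ->
  fsum N (fun i => Rpower 2 (- l i)) <= 1 ->
  fsum N (fun i => - (p i * ln (p i))) <= ln 2 * fsum N (fun i => p i * l i).
Proof.
  intros Hp Hsum Hkraft.
  assert (Hi : forall i, (i < N)%nat ->
    1 * (- (p i * ln (p i))) + 1 * p i + (-1) * Rpower 2 (- l i) <= ln 2 * (p i * l i)).
  { intros i Hi.
    pose proof (gibbs_pointwise (p i) (Rpower 2 (- l i)) (Rlt_le _ _ (Hp i Hi)) (exp_pos _)).
    rewrite ln_Rpower in H. lra. }
  pose proof (fsum_le _ _ _ Hi). rewrite fsum_linear3, fsum_scal in H. lra.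
Qed.

Lemma inf_R_bounds (P : R -> Prop) x c : P x -> (forall y, P y -> c <= y) -> c <= inf_R P <= x.
Proof.
  intros Hx Hc. unfold inf_R. destruct (Glb_Rbar_correct P) as [Hlb Hglb].
  pose proof (Hlb x Hx).
  assert (Rbar_le c (Glb_Rbar P)) by (apply Hglb; intros y Hy; apply Hc; auto).
  destruct (Glb_Rbar P); simpl in *; tauto.
Qed.

Lemma ball_R_iff (x e y : R) : ball x e y <-> Rabs (y - x) < e.
Proof. reflexivity. Qed.

Lemma at_right_0_intro (P : R -> Prop) d : 0 < d -> (forall x, 0 < x < d -> P x) -> at_right 0 P.
Proof.
  intros Hd HP. exists (mkposreal d Hd). intros x Hx Hx0. apply HP. split; [exact Hx0 |].
  rewrite ball_R_iff, Rabs_lt_between in Hx. simpl in Hx. lra.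
Qed.

Lemma RInt_minus_R (g h : R -> R) s t : ex_RInt g s t -> ex_RInt h s t ->
  RInt (fun x => g x - h x) s t = RInt g s t - RInt h s t.
Proof. intros. apply (RInt_minus g h); auto. Qed.

Lemma RInt_scal_R (g : R -> R) c s t : ex_RInt g s t ->
  RInt (fun x => c * g x) s t = c * RInt g s t.
Proof. intros. apply (RInt_scal g s t c); auto. Qed.

Lemma RInt_Chasles_R (g : R -> R) s u t : ex_RInt g s u -> ex_RInt g u t ->
  RInt g s u + RInt g u t = RInt g s t.
Proof. intros. apply (RInt_Chasles g s u t); auto. Qed.

Lemma RInt_const_R c s t : RInt (fun _ => c) s t = c * (t - s).
Proof. rewrite RInt_const. unfold scal; simpl; unfold mult; simpl. ring. Qed.

Lemma ex_RInt_minus_R (g h : R -> R) s t : ex_RInt g s t -> ex_RInt h s t ->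
  ex_RInt (fun x => g x - h x) s t.
Proof. intros. apply (ex_RInt_minus g h); auto. Qed.

Lemma ex_RInt_scal_R (g : R -> R) c s t : ex_RInt g s t -> ex_RInt (fun x => c * g x) s t.
Proof. intros. apply (ex_RInt_scal g s t c); auto. Qed.

Lemma ex_RInt_const_R (c s t : R) : ex_RInt (fun _ => c) s t.
Proof. apply (ex_RInt_const s t c). Qed.

Lemma ex_RInt_continuous_R (g : R -> R) s t : (forall x, continuous g x) -> ex_RInt g s t.
Proof. intros Hg. apply (@ex_RInt_continuous R_CompleteNormedModule). auto. Qed.

Lemma ex_RInt_subinterval (g : R -> R) a b s t :
  a <= s -> s <= t -> t <= b -> ex_RInt g a b -> ex_RInt g s t.
Proof.
  intros. apply (@ex_RInt_Chasles_1 R_CompleteNormedModule _ s t b); [lra|].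
  apply (@ex_RInt_Chasles_2 R_CompleteNormedModule _ a s b); [lra | auto].
Qed.

Lemma ex_RInt_ext_R (g h : R -> R) s t : s <= t -> (forall x, s < x < t -> g x = h x) ->
  ex_RInt g s t -> ex_RInt h s t.
Proof.
  intros. apply (@ex_RInt_ext R_NormedModule g h); auto.
  rewrite Rmin_left, Rmax_right by lra. auto.
Qed.

Lemma RInt_le_const (g : R -> R) c s t : s <= t -> ex_RInt g s t ->
  (forall x, s < x < t -> g x <= c) -> RInt g s t <= c * (t - s).
Proof. intros. rewrite <- RInt_const_R. apply RInt_le; auto. apply ex_RInt_const_R. Qed.

Lemma RInt_ge_const (g : R -> R) c s t : s <= t -> ex_RInt g s t ->
  (forall x, s < x < t -> c <= g x) -> c * (t - s) <= RInt g s t.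
Proof. intros. rewrite <- RInt_const_R. apply RInt_le; auto. apply ex_RInt_const_R. Qed.

Lemma continuous_of_ex_derive (g : R -> R) x : ex_derive g x -> continuous g x.
Proof. apply (@ex_derive_continuous R_AbsRing R_NormedModule). Qed.

Lemma ex_RInt_sq_shift c s t : ex_RInt (fun x => (x - c) ^ 2) s t.
Proof. apply ex_RInt_continuous_R. intros. apply continuous_of_ex_derive. auto_derive. auto. Qed.

(** * Densities on a bounded interval *)

(* Condition (A) only gives continuity of f within [a, b], where f may jump at the
   endpoints; f \o clamp a b is continuous everywhere and agrees with f on [a, b]. *)
Definition clamp (a b x : R) : R := Rmax a (Rmin b x).

Lemma clamp_in a b x : a <= b -> a <= clamp a b x <= b.
Proof. intros. unfold clamp, Rmax, Rmin. repeat destruct Rle_dec; lra. Qed.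

Lemma clamp_id a b x : a <= x <= b -> clamp a b x = x.
Proof. intros. unfold clamp, Rmax, Rmin. repeat destruct Rle_dec; lra. Qed.

Lemma clamp_lipschitz a b x y : a <= b -> Rabs (clamp a b y - clamp a b x) <= Rabs (y - x).
Proof.
  intros. unfold clamp, Rmax, Rmin.
  repeat destruct Rle_dec; unfold Rabs; repeat destruct Rcase_abs; lra.
Qed.

Lemma continuous_comp_clamp (g : R -> R) a b : a <= b ->
  (forall x, a <= x <= b ->
     filterlim g (within (fun y => a <= y <= b) (locally x)) (locally (g x))) ->
  forall x, continuous (fun y => g (clamp a b y)) x.
Proof.
  intros Hab Hg x.
  apply (filterlim_comp _ _ _ (clamp a b) g _
           (within (fun y => a <= y <= b) (locally (clamp a b x)))).
  - intros P [eps HP]. exists eps. intros y Hy. apply HP; [|apply clamp_in; auto].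
    apply (Rle_lt_trans _ _ _ (clamp_lipschitz a b x y Hab)). exact Hy.
  - apply Hg, clamp_in; auto.
Qed.

Definition osc_lt (f : R -> R) (s t eta : R) : Prop :=
  forall x y, s <= x <= t -> s <= y <= t -> Rabs (f x - f y) < eta.

Definition unif_modulus (f : R -> R) (a b eta d0 : R) : Prop :=
  forall x y, a <= x <= b -> a <= y <= b -> Rabs (x - y) < d0 -> Rabs (f x - f y) < eta.

Lemma osc_of_unif_modulus (f : R -> R) a b eta d0 s t : unif_modulus f a b eta d0 ->
  a <= s -> t <= b -> t - s < d0 -> osc_lt f s t eta.
Proof.
  intros Hu Hs Ht Hw x y Hx Hy. apply Hu; try lra.
  apply Rabs_lt_between. lra.
Qed.

Section Density.
Variables (f : R -> R) (a b : R).
Hypothesis hA : condA f a b.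

Lemma support_lt : a < b.
Proof. apply hA. Qed.

Lemma density_nonneg x : 0 <= f x.
Proof. apply hA. Qed.

Lemma density_outside x : x < a \/ b < x -> f x = 0.
Proof. apply hA. Qed.

Lemma density_pos_between s t : a <= s -> s < t -> t <= b -> exists z, s < z < t /\ 0 < f z.
Proof. apply hA. Qed.

Lemma RInt_density : RInt f a b = 1.
Proof. apply hA. Qed.

Lemma continuous_density_clamp x : continuous (fun y => f (clamp a b y)) x.
Proof. apply continuous_comp_clamp; [pose proof support_lt; lra | apply hA]. Qed.

Lemma ex_RInt_mul_density (g : R -> R) s t : (forall x, continuous g x) ->
  a <= s -> s <= t -> t <= b -> ex_RInt (fun x => g x * f x) s t.
Proof.
  intros Hg Hs Hst Ht.
  apply (ex_RInt_ext_R (fun x => g x * f (clamp a b x))); auto.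
  { intros x Hx. rewrite clamp_id by lra. reflexivity. }
  apply ex_RInt_continuous_R. intros x.
  apply (continuous_mult g). apply Hg. apply continuous_density_clamp.
Qed.

Lemma ex_RInt_density s t : a <= s -> s <= t -> t <= b -> ex_RInt f s t.
Proof.
  intros. apply (ex_RInt_ext_R (fun x => 1 * f x)); auto. intros; ring.
  apply ex_RInt_mul_density; auto. intros; apply continuous_const.
Qed.

Lemma ex_RInt_sq_shift_density c s t : a <= s -> s <= t -> t <= b ->
  ex_RInt (fun x => (x - c) ^ 2 * f x) s t.
Proof.
  intros. apply ex_RInt_mul_density; auto.
  intros. apply continuous_of_ex_derive. auto_derive. auto.
Qed.

Lemma density_bounded : exists M, 1 <= M /\ forall x, f x <= M.
Proof.
  pose proof support_lt.
  destruct (continuity_ab_maj (fun y => f (clamp a b y)) a b) as [m [Hm _]]; [lra| |].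
  { intros c _. apply continuity_pt_filterlim, continuous_density_clamp. }
  exists (Rmax 1 (f (clamp a b m))). split; [apply Rmax_l|].
  intros x. pose proof (Rmax_l 1 (f (clamp a b m))). pose proof (Rmax_r 1 (f (clamp a b m))).
  destruct (Rle_dec a x); [destruct (Rle_dec x b)|].
  - specialize (Hm x ltac:(lra)). rewrite clamp_id in Hm by lra. lra.
  - rewrite density_outside by lra. lra.
  - rewrite density_outside by lra. lra.
Qed.

Lemma density_unif_continuous eta : 0 < eta -> exists d0, 0 < d0 /\ unif_modulus f a b eta d0.
Proof.
  intros He.
  destruct (Heine (fun y => f (clamp a b y)) (fun c => a <= c <= b) (compact_P3 a b))
    with (mkposreal eta He) as [d Hd].
  { intros c _. apply continuity_pt_filterlim, continuous_density_clamp. }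
  exists d. split; [apply cond_pos|]. intros x y Hx Hy Hxy.
  rewrite <- (clamp_id a b x), <- (clamp_id a b y) by auto. apply Hd; auto.
Qed.

Lemma RInt_density_le s t hi : a <= s -> s <= t -> t <= b ->
  (forall x, s < x < t -> f x <= hi) -> RInt f s t <= hi * (t - s).
Proof. intros. apply RInt_le_const; auto. apply ex_RInt_density; lra. Qed.

Lemma RInt_density_nonneg s t : a <= s -> s <= t -> t <= b -> 0 <= RInt f s t.
Proof.
  intros. rewrite <- (Rmult_0_l (t - s)). apply RInt_ge_const; auto.
  apply ex_RInt_density; lra. intros; apply density_nonneg.
Qed.

Lemma RInt_density_pos s t : a <= s -> s < t -> t <= b -> 0 < RInt f s t.
Proof.
  intros Hs Hst Ht.
  destruct (density_pos_between s t Hs Hst Ht) as [z [Hz Hfz]].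
  (* f stays above f z / 2 on a neighbourhood [s', t'] of z inside [s, t] *)
  assert (Hnear : locally z (fun y => f z / 2 < f (clamp a b y))).
  { apply (continuous_density_clamp z (fun v => f z / 2 < v)).
    exists (mkposreal (f z / 2) ltac:(simpl; lra)). intros v Hv.
    apply (Rabs_lt_between' v (f (clamp a b z))) in Hv. rewrite clamp_id in Hv by lra.
    simpl in Hv. lra. }
  destruct Hnear as [al Hal].
  set (s' := Rmax s (z - al / 2)). set (t' := Rmin t (z + al / 2)).
  assert (s <= s' < z) by (unfold s', Rmax; destruct Rle_dec; pose proof (cond_pos al); lra).
  assert (z < t' <= t) by (unfold t', Rmin; destruct Rle_dec; pose proof (cond_pos al); lra).
  assert (Hmid : f z / 2 * (t' - s') <= RInt f s' t').
  { apply RInt_ge_const; [lra | apply ex_RInt_density; lra |].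
    intros x Hx. specialize (Hal x). rewrite clamp_id in Hal by lra.
    apply Rlt_le, Hal. apply (Rabs_lt_between' x z).
    unfold s', t', Rmax, Rmin in *. repeat destruct Rle_dec; lra. }
  rewrite <- (RInt_Chasles_R f s s' t), <- (RInt_Chasles_R f s' t' t)
    by (apply ex_RInt_density; lra).
  pose proof (RInt_density_nonneg s s' ltac:(lra) ltac:(lra) ltac:(lra)).
  pose proof (RInt_density_nonneg t' t ltac:(lra) ltac:(lra) ltac:(lra)).
  assert (0 < f z / 2 * (t' - s')) by (apply Rmult_lt_0_compat; lra).
  lra.
Qed.

Hypothesis hB : condB f a b.

Lemma ex_RInt_density_ln s t : a <= s -> s <= t -> t <= b ->
  ex_RInt (fun x => f x * ln (f x)) s t.
Proof.
  intros. apply (ex_RInt_ext_R (fun x => ln 2 * (f x * log2 (f x)))); auto.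
  { intros. unfold log2. field. apply Rgt_not_eq, ln2_pos. }
  apply ex_RInt_scal_R, (ex_RInt_subinterval _ a b); auto. apply hB.
Qed.

End Density.

Definition cell_distortion (f : R -> R) (Q : quantizer) (i : nat) : R :=
  RInt (fun x => (x - qc Q i) ^ 2 * f x) (qa Q i) (qa Q (S i)).

Definition quant_entropy (f : R -> R) (Q : quantizer) : R :=
  fsum (qN Q) (fun i => - (cell_prob f Q i * ln (cell_prob f Q i))).

Definition diff_entropy (f : R -> R) (a b : R) : R := - RInt (fun x => f x * ln (f x)) a b.

Definition cell_negentropy (f : R -> R) (s t : R) : R :=
  RInt (fun x => f x * ln (f x)) s t - RInt f s t * ln (RInt f s t).

Section Quantizer.
Variables (f : R -> R) (a b : R) (Q : quantizer).
Hypothesis hA : condA f a b.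
Hypothesis hQ : valid_quantizer a b Q.

Lemma qa_le i j : (i <= j <= qN Q)%nat -> qa Q i <= qa Q j.
Proof.
  intros [Hij HjN]. induction Hij; [lra|].
  assert (qa Q m < qa Q (S m)) by (apply hQ; lia). specialize (IHHij ltac:(lia)). lra.
Qed.

Lemma qa_bounds i : (i <= qN Q)%nat -> a <= qa Q i <= b.
Proof.
  intros. destruct hQ as [_ [H0 [HN _]]]. rewrite <- H0 at 1. rewrite <- HN.
  split; apply qa_le; lia.
Qed.

Lemma cell_bounds i : (i < qN Q)%nat -> a <= qa Q i /\ qa Q i < qa Q (S i) /\ qa Q (S i) <= b.
Proof.
  intros. pose proof (qa_bounds i ltac:(lia)). pose proof (qa_bounds (S i) ltac:(lia)).
  assert (qa Q i < qa Q (S i)) by (apply hQ; lia). lra.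
Qed.

Lemma fsum_cells_RInt (h : R -> R) : ex_RInt h a b ->
  fsum (qN Q) (fun i => RInt h (qa Q i) (qa Q (S i))) = RInt h a b.
Proof.
  intros Hh. destruct hQ as [_ [H0 [HN _]]].
  assert (Hpart : forall n, (n <= qN Q)%nat ->
            fsum n (fun i => RInt h (qa Q i) (qa Q (S i))) = RInt h a (qa Q n)).
  { induction n; intros Hn; cbn [fsum].
    - rewrite H0, RInt_point. reflexivity.
    - rewrite IHn by lia. pose proof (cell_bounds n ltac:(lia)).
      pose proof (qa_bounds n ltac:(lia)).
      apply RInt_Chasles_R; apply (ex_RInt_subinterval _ a b); lra || auto. }
  rewrite Hpart, HN by lia. reflexivity.
Qed.

Lemma fsum_cell_lengths : fsum (qN Q) (fun i => qa Q (S i) - qa Q i) = b - a.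
Proof. rewrite fsum_telescope. destruct hQ as [_ [-> [-> _]]]. reflexivity. Qed.

Lemma fsum_cell_prob : fsum (qN Q) (cell_prob f Q) = 1.
Proof.
  unfold cell_prob. rewrite fsum_cells_RInt. apply (RInt_density f a b hA).
  apply (ex_RInt_density f a b hA); pose proof (support_lt f a b hA); lra.
Qed.

Lemma cell_prob_pos i : (i < qN Q)%nat -> 0 < cell_prob f Q i.
Proof. intros. pose proof (cell_bounds i H). apply (RInt_density_pos f a b hA); lra. Qed.

Lemma cell_prob_le_1 i : (i < qN Q)%nat -> cell_prob f Q i <= 1.
Proof.
  intros Hi. rewrite <- fsum_cell_prob. apply fsum_term_le; auto.
  intros j Hj. apply Rlt_le, cell_prob_pos, Hj.
Qed.

Lemma cell_distortion_nonneg i : (i < qN Q)%nat -> 0 <= cell_distortion f Q i.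
Proof.
  intros Hi. pose proof (cell_bounds i Hi). unfold cell_distortion.
  rewrite <- (Rmult_0_l (qa Q (S i) - qa Q i)). apply RInt_ge_const; [lra | |].
  - apply (ex_RInt_sq_shift_density f a b hA); lra.
  - intros. apply Rmult_le_pos; [apply pow2_ge_0 | apply (density_nonneg f a b hA)].
Qed.

Lemma cell_distortion_le i : (i < qN Q)%nat -> cell_distortion f Q i <= distortion f Q.
Proof. intros Hi. apply fsum_term_le; auto. apply cell_distortion_nonneg. Qed.

Hypothesis hB : condB f a b.

Lemma fsum_cell_negentropy :
  fsum (qN Q) (fun i => cell_negentropy f (qa Q i) (qa Q (S i)))
  = quant_entropy f Q - diff_entropy f a b.
Proof.
  unfold cell_negentropy, quant_entropy, diff_entropy.
  rewrite (fsum_ext _ _ (fun i => 1 * RInt (fun x => f x * ln (f x)) (qa Q i) (qa Q (S i))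
           + 1 * (- (cell_prob f Q i * ln (cell_prob f Q i))) + 0 * 0))
    by (intros; unfold cell_prob; ring).
  rewrite fsum_linear3, fsum_cells_RInt. ring.
  apply (ex_RInt_density_ln f a b hB); pose proof (support_lt f a b hA); lra.
Qed.

End Quantizer.

(** * Estimates on a single cell *)

Lemma RInt_sq_shift c s t : RInt (fun x => (x - c) ^ 2) s t = ((t - c) ^ 3 - (s - c) ^ 3) / 3.
Proof.
  apply is_RInt_unique.
  replace (((t - c) ^ 3 - (s - c) ^ 3) / 3)
    with (minus ((fun x => (x - c) ^ 3 / 3) t) ((fun x => (x - c) ^ 3 / 3) s))
    by (unfold minus, plus, opp; simpl; field).
  apply (@is_RInt_derive R_CompleteNormedModule (fun x => (x - c) ^ 3 / 3)).
  - intros. auto_derive; auto. simpl. field.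
  - intros. apply continuous_of_ex_derive. auto_derive. auto.
Qed.

Lemma RInt_sq_shift_ge c s t : s <= t -> (t - s) ^ 3 / 12 <= RInt (fun x => (x - c) ^ 2) s t.
Proof.
  intros Hst. rewrite RInt_sq_shift.
  assert (0 <= (t - s) * (t + s - 2 * c) ^ 2) by (apply Rmult_le_pos; [lra | apply pow2_ge_0]).
  replace (((t - c) ^ 3 - (s - c) ^ 3) / 3)
    with ((t - s) ^ 3 / 12 + (t - s) * (t + s - 2 * c) ^ 2 / 4) by field.
  lra.
Qed.

Lemma RInt_sq_mid s t : RInt (fun x => (x - (s + t) / 2) ^ 2) s t = (t - s) ^ 3 / 12.
Proof. rewrite RInt_sq_shift. field_simplify. lra. Qed.

Lemma cauchy_kernel_denom_pos lam u : 0 < lam -> 0 < 1 + lam * u ^ 2.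
Proof. intros. pose proof (pow2_ge_0 u). nra. Qed.

Lemma ex_RInt_cauchy_kernel lam c s t : 0 < lam ->
  ex_RInt (fun x => / (1 + lam * (x - c) ^ 2)) s t.
Proof.
  intros. apply ex_RInt_continuous_R. intros x. apply continuous_of_ex_derive.
  auto_derive. pose proof (cauchy_kernel_denom_pos lam (x - c) H). simpl in H0. lra.
Qed.

Lemma RInt_cauchy_kernel_le lam c s t : 0 < lam -> s <= t ->
  RInt (fun x => / (1 + lam * (x - c) ^ 2)) s t <= PI / sqrt lam.
Proof.
  intros Hl Hst. set (q := sqrt lam). assert (Hq : 0 < q) by (apply sqrt_lt_R0; auto).
  assert (Hqq : q * q = lam) by (apply sqrt_sqrt; lra).
  rewrite (is_RInt_unique _ _ _ ((atan (q * (t - c)) - atan (q * (s - c))) / q)).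
  - pose proof (atan_bound (q * (t - c))). pose proof (atan_bound (q * (s - c))).
    apply Rmult_le_compat_r; [left; apply Rinv_0_lt_compat; auto | lra].
  - replace ((atan (q * (t - c)) - atan (q * (s - c))) / q) with
      (minus ((fun x => / q * atan (q * (x - c))) t) ((fun x => / q * atan (q * (x - c))) s))
      by (unfold minus, plus, opp; simpl; field; lra).
    apply (@is_RInt_derive R_CompleteNormedModule (fun x => / q * atan (q * (x - c)))).
    + intros x _.
      assert (Hin : is_derive (fun x => q * (x - c)) x q) by (auto_derive; [exact I | ring]).
      pose proof (is_derive_comp atan (fun x => q * (x - c)) x _ _ (is_derive_atan _) Hin) as Hc.
      replace (/ (1 + lam * (x - c) ^ 2)) with (/ q * scal q (/ (1 + (q * (x - c))²))).
      * apply (is_derive_scal (fun x => atan (q * (x - c)))). exact Hc.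
      * pose proof (cauchy_kernel_denom_pos lam (x - c) Hl).
        unfold scal; simpl; unfold mult; simpl. rewrite <- Hqq in *. unfold Rsqr.
        field. split; [nra | lra].
    + intros x _. apply continuous_of_ex_derive. auto_derive.
      pose proof (cauchy_kernel_denom_pos lam (x - c) Hl). simpl in H. lra.
Qed.

(* The price per unit of mass of comparing a cell with a Cauchy density instead of a
   uniform one, see cell_negentropy_ge_sparse. *)
Definition cauchy_cost : R := / 2 + ln PI.

Lemma cauchy_cost_pos : 0 < cauchy_cost.
Proof. unfold cauchy_cost. pose proof (ln_nonneg PI ltac:(pose proof PI2_3_2; lra)). lra. Qed.

Section Cell.
Variables (f : R -> R) (a b s t : R).
Hypothesis hA : condA f a b.
Hypothesis hB : condB f a b.
Hypotheses (Hs : a <= s) (Hst : s < t) (Ht : t <= b).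

Lemma ex_RInt_cell : ex_RInt f s t.
Proof. apply (ex_RInt_density f a b hA); lra. Qed.

Lemma ex_RInt_cell_ln : ex_RInt (fun x => f x * ln (f x)) s t.
Proof. apply (ex_RInt_density_ln f a b hB); lra. Qed.

Lemma ex_RInt_cell_sq c : ex_RInt (fun x => (x - c) ^ 2 * f x) s t.
Proof. apply (ex_RInt_sq_shift_density f a b hA); lra. Qed.

Ltac solve_ex_RInt_cell :=
  repeat match goal with
  | |- ex_RInt (fun x => f x * ln (f x)) s t => apply ex_RInt_cell_ln
  | |- ex_RInt (fun x => (x - _) ^ 2 * f x) s t => apply ex_RInt_cell_sq
  | |- ex_RInt (fun x => / (1 + _ * (x - _) ^ 2)) _ _ => apply ex_RInt_cauchy_kernel; assumption
  | |- ex_RInt f s t => apply ex_RInt_cell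
  | |- ex_RInt (fun x => f x) s t => apply ex_RInt_cell
  | |- ex_RInt (fun x => @?g x - @?h x) _ _ => apply (ex_RInt_minus_R g h)
  | |- ex_RInt (fun x => ?c * @?g x) _ _ => apply (ex_RInt_scal_R g c)
  | |- ex_RInt (fun _ => ?c) _ _ => apply ex_RInt_const_R
  end.

Lemma cell_mass_pos : 0 < RInt f s t.
Proof. apply (RInt_density_pos f a b hA); auto. Qed.

Lemma cell_negentropy_ge_uniform : - RInt f s t * ln (t - s) <= cell_negentropy f s t.
Proof.
  pose proof cell_mass_pos as Hp. set (p := RInt f s t : R) in *.
  (* Gibbs against the uniform density p / (t - s) *)
  assert (H : RInt (fun x => (ln (p / (t - s)) + 1) * f x - p / (t - s)) s t
              <= RInt (fun x => f x * ln (f x)) s t).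
  { apply RInt_le; [lra | | apply ex_RInt_cell_ln |].
    - apply ex_RInt_minus_R; [apply ex_RInt_scal_R, ex_RInt_cell | apply ex_RInt_const_R].
    - intros x _. pose proof (gibbs_pointwise (f x) (p / (t - s)) (density_nonneg f a b hA x)
                               ltac:(apply Rdiv_lt_0_compat; lra)). lra. }
  rewrite RInt_minus_R, RInt_scal_R, RInt_const_R, ln_div in H
    by (lra || apply ex_RInt_cell || apply ex_RInt_scal_R, ex_RInt_cell || apply ex_RInt_const_R).
  unfold cell_negentropy. fold p.
  replace (p / (t - s) * (t - s)) with p in H by (field; lra). fold p in H. lra.
Qed.

Lemma cell_distortion_ge c lo : 0 <= lo -> (forall x, s < x < t -> lo <= f x) ->
  lo * ((t - s) ^ 3 / 12) <= RInt (fun x => (x - c) ^ 2 * f x) s t.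
Proof.
  intros Hlo Hf. apply Rle_trans with (RInt (fun x => lo * (x - c) ^ 2) s t).
  - rewrite RInt_scal_R by apply ex_RInt_sq_shift.
    apply Rmult_le_compat_l; [lra | apply RInt_sq_shift_ge; lra].
  - apply RInt_le; [lra | apply ex_RInt_scal_R, ex_RInt_sq_shift | apply ex_RInt_cell_sq |].
    intros x Hx. specialize (Hf x Hx). pose proof (pow2_ge_0 (x - c)). nra.
Qed.

Lemma cell_negentropy_ge_flat c lo hi r mu : 0 < lo -> 0 <= r -> 0 < mu ->
  (forall x, s < x < t -> lo <= f x <= hi) -> hi <= (1 + r) * lo ->
  / 2 * RInt f s t * ln mu + / 2 * RInt f s t
    - 6 * mu * (1 + r) * RInt (fun x => (x - c) ^ 2 * f x) s t
  <= cell_negentropy f s t.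
Proof.
  intros Hlo Hr Hmu Hf Hhi.
  pose proof cell_negentropy_ge_uniform as HT.
  pose proof (cell_distortion_ge c lo ltac:(lra) ltac:(intros; apply Hf; auto)) as HD.
  pose proof (RInt_density_le f a b hA s t hi Hs ltac:(lra) Ht ltac:(intros; apply Hf; auto)) as Hp.
  pose proof cell_mass_pos as Hp0.
  set (p := RInt f s t : R) in *. set (D := RInt (fun x => (x - c) ^ 2 * f x) s t : R) in *.
  set (w := t - s) in *. assert (Hw : 0 < w) by (unfold w; lra).
  (* the tangent bound ln (mu w^2) <= mu w^2 - 1, weighted by p, and p w^2 <= 12 (1 + r) D *)
  pose proof (ln_le_sub_1 (mu * (w * w)) ltac:(apply Rmult_lt_0_compat; nra)) as Hln.
  rewrite !ln_mult in Hln by nra.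
  assert (Hq : p * (w * w) <= 12 * (1 + r) * D).
  { assert (p * (w * w) <= hi * w * (w * w)) by (apply Rmult_le_compat_r; nra).
    assert (hi * w * (w * w) <= (1 + r) * lo * w * (w * w)) by (apply Rmult_le_compat_r; nra).
    replace (lo * (w ^ 3 / 12)) with (lo * w * (w * w) / 12) in HD by field.
    assert ((1 + r) * (lo * w * (w * w)) <= (1 + r) * (12 * D)) by (apply Rmult_le_compat_l; lra).
    lra. }
  assert (p * ln mu + 2 * p * ln w <= p * (mu * (w * w)) - p) by nra.
  nra.
Qed.

Lemma cell_negentropy_ge_cauchy c lam : 0 < lam ->
  / 2 * RInt f s t * ln lam - RInt f s t * ln PI - lam * RInt (fun x => (x - c) ^ 2 * f x) s t
  <= cell_negentropy f s t.
Proof.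
  intros Hl. pose proof cell_mass_pos as Hp. set (p := RInt f s t : R) in *.
  assert (Hsq : 0 < sqrt lam) by (apply sqrt_lt_R0; auto).
  set (k := sqrt lam / PI). assert (Hk : 0 < k) by (apply Rdiv_lt_0_compat; auto; apply PI_RGT_0).
  (* Gibbs against the Cauchy density x |-> k / (1 + lam (x - c)^2), of total mass <= 1 *)
  assert (Hmain : RInt (fun x => (ln p + ln k + 1) * f x - lam * ((x - c) ^ 2 * f x)
                                 - p * k * / (1 + lam * (x - c) ^ 2)) s t
                  <= RInt (fun x => f x * ln (f x)) s t).
  { apply RInt_le; [lra | solve_ex_RInt_cell | solve_ex_RInt_cell |].
    intros x _. pose proof (density_nonneg f a b hA x) as Hf0.
    pose proof (cauchy_kernel_denom_pos lam (x - c) Hl) as Hq.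
    assert (HG : 0 < p * k * / (1 + lam * (x - c) ^ 2))
      by (apply Rmult_lt_0_compat; [nra | apply Rinv_0_lt_compat; auto]).
    pose proof (gibbs_pointwise (f x) _ Hf0 HG) as Hg.
    rewrite !ln_mult, ln_Rinv in Hg by (try apply Rinv_0_lt_compat; nra).
    pose proof (ln_le_sub_1 _ Hq). nra. }
  rewrite !RInt_minus_R, !RInt_scal_R in Hmain by solve_ex_RInt_cell. fold p in Hmain.
  pose proof (RInt_cauchy_kernel_le lam c s t Hl ltac:(lra)) as HI.
  assert (p * k * RInt (fun x => / (1 + lam * (x - c) ^ 2)) s t <= p).
  { apply Rle_trans with (p * k * (PI / sqrt lam)); [apply Rmult_le_compat_l; nra |].
    unfold k. right. field. split; apply Rgt_not_eq; try apply PI_RGT_0; auto. }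
  assert (Hlk : ln k = / 2 * ln lam - ln PI).
  { unfold k. rewrite ln_div by (auto; apply PI_RGT_0).
    rewrite <- (sqrt_sqrt lam) at 2 by lra. rewrite ln_mult by auto. lra. }
  unfold cell_negentropy. fold p. rewrite Hlk in Hmain. nra.
Qed.

Lemma cell_negentropy_ge_sparse c lam mu kappa : 0 < mu <= lam -> RInt f s t <= kappa * (t - s) ->
  (/ 2 * ln mu + / 2) * RInt f s t - lam * RInt (fun x => (x - c) ^ 2 * f x) s t
    - cauchy_cost * kappa * (t - s)
  <= cell_negentropy f s t.
Proof.
  intros Hmu Hk. pose proof (cell_negentropy_ge_cauchy c lam ltac:(lra)) as HT.
  pose proof cell_mass_pos as Hp. pose proof cauchy_cost_pos.
  set (p := RInt f s t : R) in *.
  assert (ln mu <= ln lam) by (apply ln_le; lra).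
  assert (cauchy_cost * p <= cauchy_cost * (kappa * (t - s))) by (apply Rmult_le_compat_l; lra).
  unfold cauchy_cost in *. nra.
Qed.

Lemma cell_mass_cube_le c M : 0 < M -> (forall x, f x <= M) ->
  RInt f s t ^ 3 <= 8 * PI ^ 2 * M ^ 2 * RInt (fun x => (x - c) ^ 2 * f x) s t.
Proof.
  intros HM HfM. pose proof cell_mass_pos as Hp. set (p := RInt f s t : R) in *.
  set (D := RInt (fun x => (x - c) ^ 2 * f x) s t : R).
  assert (HPI := PI_RGT_0).
  set (r := p / (2 * PI * M)). assert (Hr : 0 < r) by (apply Rdiv_lt_0_compat; nra).
  set (lam := / (r * r)). assert (Hl : 0 < lam) by (apply Rinv_0_lt_compat; nra).
  (* pointwise u >= r^2 - r^4 / (r^2 + u) for u = (x - c)^2; integrating gives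
     D >= r^2 (p - PI M r), and r = p / (2 PI M) maximizes this *)
  assert (Hmain : RInt (fun x => r * r * f x - M * (r * r) * / (1 + lam * (x - c) ^ 2)) s t <= D).
  { apply RInt_le; [lra | solve_ex_RInt_cell | solve_ex_RInt_cell |].
    intros x _. pose proof (density_nonneg f a b hA x). specialize (HfM x).
    pose proof (pow2_ge_0 (x - c)). set (u := (x - c) ^ 2) in *.
    assert (Hrr : 0 < r * r) by nra.
    set (q := r * r / (r * r + u)).
    assert (Hq : 0 <= q) by (apply Rdiv_le_0_compat; lra).
    assert (Hid : / (1 + lam * u) = q) by (unfold q, lam; field; lra).
    assert (Hfrac : r * r - r * r * q <= u).
    { replace (r * r - r * r * q) with (u - u * u / (r * r + u)) by (unfold q; field; lra).
      assert (0 <= u * u / (r * r + u)) by (apply Rdiv_le_0_compat; nra). lra. }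
    assert ((r * r - r * r * q) * f x <= u * f x) by (apply Rmult_le_compat_r; lra).
    assert (r * r * q * f x <= r * r * q * M) by (apply Rmult_le_compat_l; nra).
    rewrite Hid. lra. }
  rewrite RInt_minus_R, !RInt_scal_R in Hmain by solve_ex_RInt_cell. fold p in Hmain.
  pose proof (RInt_cauchy_kernel_le lam c s t Hl ltac:(lra)) as HI.
  assert (Hsl : sqrt lam = / r) by (unfold lam; rewrite sqrt_inv, sqrt_square; lra).
  rewrite Hsl in HI. replace (PI / / r) with (PI * r) in HI by (field; lra).
  assert (M * (r * r) * RInt (fun x => / (1 + lam * (x - c) ^ 2)) s t <= M * (r * r) * (PI * r))
    by (apply Rmult_le_compat_l; nra).
  replace (p ^ 3) with (8 * PI ^ 2 * M ^ 2 * (r * r * (p - PI * M * r))) by (unfold r; field; lra).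
  apply Rmult_le_compat_l; [nra | lra].
Qed.

Lemma cell_negentropy_le K : 0 < K -> (forall x, s < x < t -> f x <= K) ->
  cell_negentropy f s t <= RInt f s t * ln K - RInt f s t * ln (RInt f s t).
Proof.
  intros HK Hf. unfold cell_negentropy.
  rewrite (Rmult_comm (RInt f s t) (ln K)), <- RInt_scal_R by apply ex_RInt_cell.
  apply Rplus_le_compat_r, RInt_le; [lra | solve_ex_RInt_cell | solve_ex_RInt_cell |].
  intros x Hx. pose proof (density_nonneg f a b hA x). specialize (Hf x Hx).
  destruct (Req_dec (f x) 0) as [-> | Hne]; [lra |].
  rewrite (Rmult_comm (ln K)). apply Rmult_le_compat_l, ln_le; lra.
Qed.

Lemma cell_distortion_mid_le K : (forall x, s < x < t -> f x <= K) ->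
  RInt (fun x => (x - (s + t) / 2) ^ 2 * f x) s t <= K * ((t - s) ^ 3 / 12).
Proof.
  intros Hf. rewrite <- RInt_sq_mid, <- RInt_scal_R by apply ex_RInt_sq_shift.
  apply RInt_le; [lra | solve_ex_RInt_cell | apply ex_RInt_scal_R, ex_RInt_sq_shift |].
  intros x Hx. rewrite Rmult_comm. apply Rmult_le_compat_r; [apply pow2_ge_0 | auto].
Qed.

Lemma density_le_cell_mean eta : osc_lt f s t eta ->
  forall x, s < x < t -> f x <= RInt f s t / (t - s) + eta.
Proof.
  intros Hosc x Hx.
  assert (Hlow : (f x - eta) * (t - s) <= RInt f s t).
  { apply RInt_ge_const; [lra | apply ex_RInt_cell |]. intros y Hy.
    specialize (Hosc x y ltac:(lra) ltac:(lra)). apply Rabs_lt_between in Hosc. lra. }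
  apply (Rmult_le_reg_r (t - s)); [lra |].
  replace ((RInt f s t / (t - s) + eta) * (t - s)) with (RInt f s t + eta * (t - s))
    by (field; lra).
  lra.
Qed.

Lemma density_near_left_end eta : osc_lt f s t eta ->
  forall x, s < x < t -> f s - eta <= f x <= f s + eta.
Proof.
  intros Hosc x Hx. specialize (Hosc x s ltac:(lra) ltac:(lra)).
  apply Rabs_lt_between in Hosc. lra.
Qed.

Lemma cell_negentropy_ge_nearly_const c th eta mu : 0 < th -> 0 < eta -> 0 < mu ->
  osc_lt f s t eta -> th + eta <= f s ->
  / 2 * RInt f s t * ln mu + / 2 * RInt f s t
    - 6 * mu * (1 + 2 * eta / th) * RInt (fun x => (x - c) ^ 2 * f x) s t
  <= cell_negentropy f s t.
Proof.
  intros Hth Heta Hmu Hosc Hbig. set (r := 2 * eta / th).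
  assert (Hr : r * th = 2 * eta) by (unfold r; field; lra).
  assert (0 <= r) by (apply Rlt_le, Rdiv_lt_0_compat; lra).
  apply (cell_negentropy_ge_flat c (f s - eta) (f s + eta)); try lra.
  - apply density_near_left_end, Hosc.
  - assert (r * th <= r * (f s - eta)) by (apply Rmult_le_compat_l; lra). lra.
Qed.

Lemma cell_mass_le_of_small_density th eta : osc_lt f s t eta -> f s < th + eta ->
  RInt f s t <= (th + 2 * eta) * (t - s).
Proof.
  intros Hosc Hsmall. apply (RInt_density_le f a b hA); try lra.
  intros x Hx. pose proof (density_near_left_end eta Hosc x Hx). lra.
Qed.

Lemma cell_mass_le_of_distortion c M U e1 : 0 < M -> (forall x, f x <= M) -> 0 < e1 ->
  RInt (fun x => (x - c) ^ 2 * f x) s t <= U -> 8 * PI ^ 2 * M ^ 2 * U <= e1 ^ 3 ->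
  RInt f s t <= e1.
Proof.
  intros HM0 HM He1 HD HUe1. pose proof (cell_mass_cube_le c M HM0 HM) as Hcube.
  assert (8 * PI ^ 2 * M ^ 2 * RInt (fun x => (x - c) ^ 2 * f x) s t <= 8 * PI ^ 2 * M ^ 2 * U)
    by (apply Rmult_le_compat_l; [pose proof PI_RGT_0; nra | lra]).
  pose proof cell_mass_pos. set (p := RInt f s t : R) in *.
  destruct (Rle_lt_dec p e1) as [| Hgt]; [auto | exfalso].
  assert (e1 * e1 < p * p) by nra. assert (e1 ^ 3 < p ^ 3) by (simpl; nra). lra.
Qed.

End Cell.

(** * Entropy of fine quantizers *)

Lemma ceil_nat_spec x : 0 < x -> x <= INR (ceil_nat x) < x + 1 /\ (1 <= ceil_nat x)%nat.
Proof.
  intros Hx. unfold ceil_nat. destruct (base_Int_part (- x)) as [H1 H2].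
  assert (Hz : IZR (- Int_part (- x)) = - IZR (Int_part (- x))) by apply opp_IZR.
  assert (Hpos : (0 < - Int_part (- x))%Z) by (apply lt_0_IZR; lra).
  rewrite INR_IZR_INZ, Z2Nat.id by lia. split; [lra | lia].
Qed.

Section UniformQuantizer.
Variables (a b delta : R).
Hypotheses (Hab : a < b) (Hd : 0 < delta).

Lemma uni_cells_count :
  b - a <= INR (qN (Q_uni a b delta)) * delta < b - a + delta /\ (1 <= qN (Q_uni a b delta))%nat.
Proof.
  destruct (ceil_nat_spec ((b - a) / delta)) as [[H1 H2] H3]; [apply Rdiv_lt_0_compat; lra |].
  cbn [qN Q_uni]. split; auto.
  set (x := (b - a) / delta) in *. assert (Hx : b - a = x * delta) by (unfold x; field; lra).
  rewrite Hx. split; nra.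
Qed.

Lemma uni_cell_start_lt i : (i < qN (Q_uni a b delta))%nat -> a + INR i * delta < b.
Proof.
  intros Hi. destruct (ceil_nat_spec ((b - a) / delta)) as [[H1 H2] _];
    [apply Rdiv_lt_0_compat; lra |].
  cbn [qN Q_uni] in Hi.
  assert (INR i + 1 <= INR (ceil_nat ((b - a) / delta))) by (rewrite <- S_INR; apply le_INR; lia).
  set (x := (b - a) / delta) in *. assert (Hx : b - a = x * delta) by (unfold x; field; lra).
  assert (INR i * delta < x * delta) by (apply Rmult_lt_compat_r; lra). lra.
Qed.

Lemma uni_cell_bounds i : (i < qN (Q_uni a b delta))%nat ->
  qa (Q_uni a b delta) i = a + INR i * delta /\
  qa (Q_uni a b delta) (S i) = Rmin (a + INR i * delta + delta) b.
Proof.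
  intros Hi. pose proof (uni_cell_start_lt i Hi). cbn [qa Q_uni].
  rewrite Rmin_left by lra. rewrite S_INR. split; [reflexivity | f_equal; ring].
Qed.

Lemma Q_uni_valid : valid_quantizer a b (Q_uni a b delta).
Proof.
  destruct uni_cells_count as [[H1 H2] H3]. split; [auto |].
  split; [cbn; rewrite Rmult_0_l, Rplus_0_r; apply Rmin_left; lra |].
  split; [cbn [qa qN Q_uni] in *; apply Rmin_right; lra |].
  intros i Hi. destruct (uni_cell_bounds i Hi) as [-> ->]. pose proof (uni_cell_start_lt i Hi).
  unfold Rmin; destruct Rle_dec; lra.
Qed.

Lemma uni_cell_length_le i : (i < qN (Q_uni a b delta))%nat ->
  qa (Q_uni a b delta) (S i) - qa (Q_uni a b delta) i <= delta.
Proof.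
  intros Hi. destruct (uni_cell_bounds i Hi) as [-> ->].
  pose proof (Rmin_l (a + INR i * delta + delta) b). lra.
Qed.

End UniformQuantizer.

Section EntropyBounds.
Variables (f : R -> R) (a b : R).
Hypothesis hA : condA f a b.
Hypothesis hB : condB f a b.

Section Uniform.
Variables (delta M eta d0 : R).
Hypotheses (Hd : 0 < delta) (Hdd : delta < d0) (Heta : 0 < eta).
Hypothesis Hu : unif_modulus f a b eta d0.
Hypothesis HM : forall x, f x <= M.

Let Q := Q_uni a b delta.

Lemma uni_cell_negentropy_le i : (i < qN Q)%nat ->
  cell_negentropy f (qa Q i) (qa Q (S i))
  <= - ln delta * cell_prob f Q i + (eta - M) * (qa Q (S i) - qa Q i) + M * delta * 1.
Proof.
  intros Hi. pose proof (support_lt f a b hA).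
  destruct (cell_bounds a b Q (Q_uni_valid a b delta ltac:(lra) Hd) i Hi) as [Hs [Hst Ht]].
  pose proof (uni_cell_length_le a b delta ltac:(lra) Hd i Hi) as Hw. fold Q in Hw.
  unfold cell_prob. set (s := qa Q i) in *. set (t := qa Q (S i)) in *.
  pose proof (cell_mass_pos f a b s t hA Hs Hst Ht) as Hp.
  pose proof (RInt_density_le f a b hA s t M Hs ltac:(lra) Ht ltac:(intros; apply HM)) as HpM.
  assert (HK := density_le_cell_mean f a b s t hA Hs Hst Ht eta
                  (osc_of_unif_modulus f a b eta d0 s t Hu Hs Ht ltac:(lra))).
  set (p := RInt f s t : R) in *. set (w := t - s) in *.
  assert (Hw0 : 0 < w) by (unfold w; lra).
  pose proof (cell_negentropy_le f a b s t hA hB Hs Hst Ht (p / w + eta)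
                ltac:(assert (0 < p / w) by (apply Rdiv_lt_0_compat; lra); lra) HK) as HT.
  fold p in HT.
  assert (Hln1 : ln (p / w + eta) - ln p <= eta * w / p - ln w).
  { assert (Hq : 0 < eta * w / p) by (apply Rdiv_lt_0_compat; nra).
    replace (p / w + eta) with ((1 + eta * w / p) / w * p) by (field; lra).
    rewrite ln_mult, ln_div by (try apply Rdiv_lt_0_compat; lra).
    pose proof (ln_1_plus_le (eta * w / p) ltac:(lra)). lra. }
  assert (Hln2 : p * (ln delta - ln w) <= M * (delta - w)).
  { rewrite <- ln_div by lra.
    pose proof (ln_le_sub_1 (delta / w) ltac:(apply Rdiv_lt_0_compat; lra)).
    apply Rle_trans with (p * (delta / w - 1)); [apply Rmult_le_compat_l; lra |].
    replace (p * (delta / w - 1)) with (p / w * (delta - w)) by (field; lra).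
    apply Rmult_le_compat_r; [lra |]. apply (Rmult_le_reg_r w); [lra |].
    replace (p / w * w) with p by (field; lra). lra. }
  assert (p * (ln (p / w + eta) - ln p) <= p * (eta * w / p - ln w))
    by (apply Rmult_le_compat_l; lra).
  replace (p * (eta * w / p - ln w)) with (eta * w - p * ln w) in H0 by (field; lra).
  lra.
Qed.

Lemma uni_cell_distortion_le i : (i < qN Q)%nat ->
  cell_distortion f Q i
  <= delta ^ 2 / 12 * cell_prob f Q i + delta ^ 2 * eta / 12 * (qa Q (S i) - qa Q i) + 0 * 0.
Proof.
  intros Hi. pose proof (support_lt f a b hA).
  destruct (cell_bounds a b Q (Q_uni_valid a b delta ltac:(lra) Hd) i Hi) as [Hs [Hst Ht]].
  pose proof (uni_cell_length_le a b delta ltac:(lra) Hd i Hi) as Hw. fold Q in Hw.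
  unfold cell_prob, cell_distortion. change (qc Q i) with ((qa Q i + qa Q (S i)) / 2).
  set (s := qa Q i) in *. set (t := qa Q (S i)) in *.
  pose proof (cell_mass_pos f a b s t hA Hs Hst Ht) as Hp.
  assert (HK := density_le_cell_mean f a b s t hA Hs Hst Ht eta
                  (osc_of_unif_modulus f a b eta d0 s t Hu Hs Ht ltac:(lra))).
  pose proof (cell_distortion_mid_le f a b s t hA Hs Hst Ht _ HK) as HD.
  set (p := RInt f s t : R) in *. set (w := t - s) in *.
  assert (Hw0 : 0 < w) by (unfold w; lra).
  replace ((p / w + eta) * (w ^ 3 / 12)) with ((p + eta * w) * w ^ 2 / 12) in HD by (field; lra).
  assert (w ^ 2 <= delta ^ 2) by (apply pow_incr; lra).
  assert ((p + eta * w) * w ^ 2 <= (p + eta * w) * delta ^ 2) by (apply Rmult_le_compat_l; nra).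
  lra.
Qed.

Lemma quant_entropy_uni_le :
  quant_entropy f Q <= diff_entropy f a b - ln delta + eta * (b - a) + M * delta.
Proof.
  pose proof (support_lt f a b hA) as Hab. assert (hQ := Q_uni_valid a b delta ltac:(lra) Hd).
  pose proof (fsum_le _ _ _ uni_cell_negentropy_le) as H.
  rewrite fsum_linear3, (fsum_cell_negentropy f a b Q hA hQ hB), (fsum_cell_prob f a b Q hA hQ),
    (fsum_cell_lengths a b Q hQ), fsum_const in H.
  destruct (uni_cells_count a b delta ltac:(lra) Hd) as [[_ HN] _]. fold Q in HN.
  assert (0 <= M) by (pose proof (density_nonneg f a b hA a); specialize (HM a); lra).
  assert (M * (INR (qN Q) * delta) <= M * (b - a + delta)) by (apply Rmult_le_compat_l; lra).
  nra.
Qed.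

Lemma distortion_uni_le : distortion f Q <= delta ^ 2 / 12 * (1 + eta * (b - a)).
Proof.
  pose proof (support_lt f a b hA) as Hab. assert (hQ := Q_uni_valid a b delta ltac:(lra) Hd).
  pose proof (fsum_le _ _ _ uni_cell_distortion_le) as H.
  rewrite fsum_linear3, (fsum_cell_prob f a b Q hA hQ), (fsum_cell_lengths a b Q hQ) in H.
  change (fsum (qN Q) (cell_distortion f Q)) with (distortion f Q) in H. lra.
Qed.

End Uniform.

Section Lower.
Variables (M th eta d0 e1 U : R) (Q : quantizer).
Hypotheses (HM0 : 0 < M) (HM : forall x, f x <= M).
Hypotheses (Hth : 0 < th) (Heta : 0 < eta) (Hd0 : 0 < d0) (He1 : 0 < e1) (HU : 0 < U).
Hypothesis Hu : unif_modulus f a b eta d0.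
Hypothesis HUe1 : 8 * PI ^ 2 * M ^ 2 * U <= e1 ^ 3.
Hypothesis hQ : valid_quantizer a b Q.
Hypothesis HDQ : distortion f Q <= U.

Let r := 2 * eta / th.
Let mu := / (12 * (1 + r) * U).
Let kappa := th + 2 * eta + e1 / d0.

Lemma cell_negentropy_ge_param i : (i < qN Q)%nat ->
  (/ 2 * ln mu + / 2) * cell_prob f Q i + (- / (2 * U)) * cell_distortion f Q i
    + (- (cauchy_cost * kappa)) * (qa Q (S i) - qa Q i)
  <= cell_negentropy f (qa Q i) (qa Q (S i)).
Proof.
  intros Hi. destruct (cell_bounds a b Q hQ i Hi) as [Hs [Hst Ht]].
  pose proof (cell_distortion_le f a b Q hA hQ i Hi) as HDi.
  unfold cell_prob, cell_distortion in *.
  set (s := qa Q i) in *. set (t := qa Q (S i)) in *. set (c := qc Q i) in *.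
  pose proof (cell_mass_pos f a b s t hA Hs Hst Ht) as Hp.
  assert (Hr : 0 <= r) by (apply Rlt_le, Rdiv_lt_0_compat; lra).
  assert (Hmu : 0 < mu) by (apply Rinv_0_lt_compat; nra).
  assert (Hlam : / (2 * U) = 6 * mu * (1 + r)) by (unfold mu; field; lra).
  assert (Hmulam : 0 < mu <= / (2 * U)) by (rewrite Hlam; nra).
  assert (He1d0 : 0 < e1 / d0) by (apply Rdiv_lt_0_compat; lra).
  pose proof cauchy_cost_pos.
  destruct (Rlt_dec (t - s) d0) as [Hshort | Hlong];
    [destruct (Rle_dec (th + eta) (f s)) as [Hbig | Hsmall] |].
  - pose proof (cell_negentropy_ge_nearly_const f a b s t hA hB Hs Hst Ht c th eta mu Hth Heta Hmu
                  (osc_of_unif_modulus f a b eta d0 s t Hu Hs Ht Hshort) Hbig).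
    assert (0 <= cauchy_cost * kappa * (t - s))
      by (apply Rmult_le_pos; [apply Rmult_le_pos |]; unfold kappa; lra).
    rewrite Hlam. fold r in H0. lra.
  - pose proof (cell_mass_le_of_small_density f a b s t hA Hs Hst Ht th eta
                  (osc_of_unif_modulus f a b eta d0 s t Hu Hs Ht Hshort) ltac:(lra)).
    assert (Hpk : RInt f s t <= kappa * (t - s)) by (unfold kappa; nra).
    pose proof (cell_negentropy_ge_sparse f a b s t hA hB Hs Hst Ht c _ _ _ Hmulam Hpk). lra.
  - pose proof (cell_mass_le_of_distortion f a b s t hA Hs Hst Ht c M U e1 HM0 HM He1
                  ltac:(lra) HUe1).
    assert (e1 <= e1 / d0 * (t - s)).
    { replace e1 with (e1 / d0 * d0) at 1 by (field; lra). apply Rmult_le_compat_l; lra. }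
    assert (Hpk : RInt f s t <= kappa * (t - s)) by (unfold kappa; nra).
    pose proof (cell_negentropy_ge_sparse f a b s t hA hB Hs Hst Ht c _ _ _ Hmulam Hpk). lra.
Qed.

Lemma quant_entropy_ge_param :
  diff_entropy f a b - / 2 * ln (12 * U) - eta / th
    - cauchy_cost * (th + 2 * eta + e1 / d0) * (b - a)
  <= quant_entropy f Q.
Proof.
  pose proof (fsum_le _ _ _ cell_negentropy_ge_param) as H.
  rewrite fsum_linear3, (fsum_cell_negentropy f a b Q hA hQ hB), (fsum_cell_prob f a b Q hA hQ),
    (fsum_cell_lengths a b Q hQ) in H.
  change (fsum (qN Q) (cell_distortion f Q)) with (distortion f Q) in H.
  assert (Hr : 0 < r) by (apply Rdiv_lt_0_compat; lra).
  assert (Hmu : ln mu = - ln (12 * U) - ln (1 + r)).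
  { unfold mu. rewrite ln_Rinv, (Rmult_comm 12), Rmult_assoc, ln_mult by nra. ring. }
  assert (ln (1 + r) <= 2 * (eta / th)) by (apply (Rle_trans _ r); [apply ln_1_plus_le; lra |
                                            unfold r; right; field; lra]).
  assert (/ (2 * U) * distortion f Q <= / 2).
  { replace (/ 2) with (/ (2 * U) * U) by (field; lra).
    apply Rmult_le_compat_l; [apply Rlt_le, Rinv_0_lt_compat |]; lra. }
  fold r kappa. lra.
Qed.

End Lower.

End EntropyBounds.

Section Asymptotics.
Variables (f : R -> R) (a b : R).
Hypothesis hA : condA f a b.
Hypothesis hB : condB f a b.

Lemma quant_entropy_uni_upper_asympt eps : 0 < eps -> at_right 0 (fun delta =>
  quant_entropy f (Q_uni a b delta) <= diff_entropy f a b - ln delta + eps /\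
  distortion f (Q_uni a b delta) <= delta ^ 2 / 12 * (1 + eps)).
Proof.
  intros Heps. pose proof (support_lt f a b hA) as Hab.
  destruct (density_bounded f a b hA) as [M [HM1 HM]].
  set (eta := eps / (2 * (b - a))).
  assert (Heta : 0 < eta) by (apply Rdiv_lt_0_compat; lra).
  assert (HetaL : eta * (b - a) = eps / 2) by (unfold eta; field; lra).
  destruct (density_unif_continuous f a b hA eta Heta) as [d0 [Hd0 Hu]].
  apply (at_right_0_intro _ (Rmin d0 (eps / (2 * M)))).
  { apply Rmin_pos; [lra | apply Rdiv_lt_0_compat; lra]. }
  intros delta [Hd Hdd].
  assert (Hdd0 : delta < d0) by (pose proof (Rmin_l d0 (eps / (2 * M))); lra).
  assert (HMd : M * delta <= eps / 2).
  { pose proof (Rmin_r d0 (eps / (2 * M))).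
    replace (eps / 2) with (M * (eps / (2 * M))) by (field; lra).
    apply Rmult_le_compat_l; lra. }
  pose proof (quant_entropy_uni_le f a b hA hB delta M eta d0 Hd Hdd0 Heta Hu HM).
  pose proof (distortion_uni_le f a b hA delta eta d0 Hd Hdd0 Heta Hu).
  assert (delta ^ 2 / 12 * (1 + eta * (b - a)) <= delta ^ 2 / 12 * (1 + eps))
    by (apply Rmult_le_compat_l; [pose proof (pow2_ge_0 delta); lra | lra]).
  split; lra.
Qed.

Lemma quant_entropy_lower_asympt eps : 0 < eps -> exists U0, 0 < U0 /\
  forall U Q, 0 < U < U0 -> valid_quantizer a b Q -> distortion f Q <= U ->
  diff_entropy f a b - / 2 * ln (12 * U) - eps <= quant_entropy f Q.
Proof.
  intros Heps. pose proof (support_lt f a b hA) as Hab. pose proof cauchy_cost_pos as HC.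
  set (L := b - a) in *. assert (HL : 0 < L) by (unfold L; lra).
  assert (HCL : 0 < 4 * cauchy_cost * L) by nra.
  destruct (density_bounded f a b hA) as [M [HM1 HM]].
  (* each of the four error terms of quant_entropy_ge_param is made at most eps / 4 *)
  set (th := eps / (4 * cauchy_cost * L)). assert (Hth : 0 < th) by (apply Rdiv_lt_0_compat; lra).
  set (eta := Rmin (th * eps / 4) (eps / (8 * cauchy_cost * L))).
  assert (Heta : 0 < eta).
  { apply Rmin_pos; apply Rdiv_lt_0_compat; nra. }
  assert (Heta1 : eta <= th * eps / 4) by apply Rmin_l.
  assert (Heta2 : eta <= eps / (8 * cauchy_cost * L)) by apply Rmin_r.
  destruct (density_unif_continuous f a b hA eta Heta) as [d0 [Hd0 Hu]].
  set (e1 := eps * d0 / (4 * cauchy_cost * L)).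
  assert (He1 : 0 < e1) by (apply Rdiv_lt_0_compat; nra).
  assert (HPM : 0 < 8 * PI ^ 2 * M ^ 2).
  { assert (0 < PI ^ 2) by (apply pow_lt, PI_RGT_0).
    assert (0 < M ^ 2) by (apply pow_lt; lra). nra. }
  set (K := 8 * PI ^ 2 * M ^ 2) in *.
  exists (e1 ^ 3 / K). split; [apply Rdiv_lt_0_compat; [apply pow_lt |]; lra |].
  intros U Q [HU HU0] hQ HDQ.
  assert (HUe1 : K * U <= e1 ^ 3).
  { apply (Rmult_le_reg_r (/ K)); [apply Rinv_0_lt_compat; lra |].
    replace (K * U * / K) with U by (field; lra). lra. }
  pose proof (quant_entropy_ge_param f a b hA hB M th eta d0 e1 U Q ltac:(lra) HM Hth Heta Hd0 He1
                HU Hu HUe1 hQ HDQ) as Hlow. fold L in Hlow.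
  assert (Hr : eta / th <= eps / 4).
  { apply (Rmult_le_reg_r th); [lra |]. replace (eta / th * th) with eta by (field; lra). lra. }
  assert (Hth' : cauchy_cost * th * L = eps / 4) by (unfold th; field; split; lra).
  assert (He1' : cauchy_cost * (e1 / d0) * L = eps / 4) by (unfold e1; field; repeat split; lra).
  assert (Heta' : cauchy_cost * (2 * eta) * L <= eps / 4).
  { replace (eps / 4) with (cauchy_cost * (2 * (eps / (8 * cauchy_cost * L))) * L)
      by (field; split; lra).
    apply Rmult_le_compat_r; [lra |]. apply Rmult_le_compat_l; lra. }
  replace (cauchy_cost * (th + 2 * eta + e1 / d0) * L)
    with (cauchy_cost * th * L + cauchy_cost * (2 * eta) * L + cauchy_cost * (e1 / d0) * L)
    in Hlow by ring.
  lra.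
Qed.

Lemma quant_entropy_uni_near_opt eps : 0 < eps -> at_right 0 (fun delta =>
  forall Q, valid_quantizer a b Q -> distortion f Q <= distortion f (Q_uni a b delta) ->
  quant_entropy f (Q_uni a b delta) - eps <= quant_entropy f Q).
Proof.
  intros Heps. set (e := eps / 3). assert (He : 0 < e) by (unfold e; lra).
  destruct (quant_entropy_lower_asympt e He) as [U0 [HU0 Hlow]].
  assert (Hd0 : 0 < Rmin 1 (12 * U0 / (1 + e)))
    by (apply Rmin_pos; [lra | apply Rdiv_lt_0_compat; lra]).
  generalize (filter_and _ _ (quant_entropy_uni_upper_asympt e He)
                (at_right_0_intro _ _ Hd0 (fun x Hx => Hx))).
  apply filter_imp. intros delta [[Hup HDup] [Hd Hdd]] Q hQ HDQ.
  set (U := delta ^ 2 / 12 * (1 + e)) in *.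
  assert (HU : 0 < U < U0).
  { pose proof (Rmin_l 1 (12 * U0 / (1 + e))). pose proof (Rmin_r 1 (12 * U0 / (1 + e))).
    assert (delta * (1 + e) < 12 * U0).
    { apply (Rmult_lt_reg_r (/ (1 + e))); [apply Rinv_0_lt_compat; lra |].
      replace (delta * (1 + e) * / (1 + e)) with delta by (field; lra). unfold Rdiv in *. lra. }
    unfold U.
    split; [apply Rmult_lt_0_compat; [apply Rdiv_lt_0_compat; [apply pow_lt |] |] |]; try lra.
    simpl. nra. }
  pose proof (Hlow U Q HU hQ ltac:(lra)) as HQ.
  assert (Hln : ln (12 * U) = 2 * ln delta + ln (1 + e)).
  { replace (12 * U) with (delta * delta * (1 + e)) by (unfold U; simpl; field).
    rewrite !ln_mult by nra. ring. }
  pose proof (ln_1_plus_le e ltac:(lra)).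
  unfold e in *. lra.
Qed.

Lemma uni_cell_prob_le delta M i : 0 < delta -> (forall x, f x <= M) ->
  (i < qN (Q_uni a b delta))%nat -> cell_prob f (Q_uni a b delta) i <= M * delta.
Proof.
  intros Hd HM Hi. pose proof (support_lt f a b hA) as Hab.
  destruct (cell_bounds a b _ (Q_uni_valid a b delta Hab Hd) i Hi) as [Hs [Hst Ht]].
  pose proof (uni_cell_length_le a b delta Hab Hd i Hi).
  eapply Rle_trans; [apply (RInt_density_le f a b hA); try lra; intros; apply HM |].
  assert (0 <= M) by (pose proof (density_nonneg f a b hA a); specialize (HM a); lra).
  apply Rmult_le_compat_l; lra.
Qed.

Lemma quant_entropy_uni_ge delta M : 0 < delta -> (forall x, f x <= M) ->
  - ln (M * delta) <= quant_entropy f (Q_uni a b delta).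
Proof.
  intros Hd HM. pose proof (support_lt f a b hA) as Hab.
  assert (hQ := Q_uni_valid a b delta Hab Hd).
  rewrite <- (Rmult_1_r (- ln (M * delta))), <- (fsum_cell_prob f a b _ hA hQ), <- fsum_scal.
  apply fsum_le. intros i Hi.
  pose proof (cell_prob_pos f a b _ hA hQ i Hi). pose proof (uni_cell_prob_le delta M i Hd HM Hi).
  assert (ln (cell_prob f (Q_uni a b delta) i) <= ln (M * delta)) by (apply ln_le; lra).
  nra.
Qed.

Lemma quant_entropy_uni_large Z : at_right 0 (fun delta => Z <= quant_entropy f (Q_uni a b delta)).
Proof.
  destruct (density_bounded f a b hA) as [M [HM1 HM]].
  apply (at_right_0_intro _ (exp (- Z) / M)); [apply Rdiv_lt_0_compat; [apply exp_pos | lra] |].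
  intros delta [Hd Hdd]. pose proof (quant_entropy_uni_ge delta M Hd HM).
  assert (ln (M * delta) <= - Z).
  { rewrite <- (ln_exp (- Z)). apply ln_le; [nra |].
    replace (exp (- Z)) with (M * (exp (- Z) / M)) by (field; lra).
    apply Rmult_le_compat_l; lra. }
  lra.
Qed.

End Asymptotics.

(** * Age of information *)

Section AoIBounds.
Variables (f : R -> R) (a b : R).
Hypothesis hA : condA f a b.

Lemma AoI_ge_expected_length W z Q l : valid_quantizer a b Q -> valid_code Q l ->
  valid_policy W z -> 3 / 2 * fsum (qN Q) (fun i => cell_prob f Q i * l i) <= AoI f z Q l.
Proof.
  intros hQ [Hl _] Hz. unfold AoI. cbv zeta.
  pose proof (cell_prob_pos f a b Q hA hQ) as Hp. pose proof (fsum_cell_prob f a b Q hA hQ) as Hsum.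
  set (p := cell_prob f Q) in *.
  set (EL := fsum (qN Q) (fun i => p i * l i)).
  set (E1 := fsum (qN Q) (fun i => p i * (l i + z (l i)))).
  assert (HEL : 0 < EL).
  { apply fsum_pos; [apply hQ |]. intros i Hi. apply Rmult_lt_0_compat; auto. }
  assert (HE1 : EL <= E1).
  { apply fsum_le. intros i Hi.
    pose proof (Hz (l i) (Rlt_le _ _ (Hl i Hi))). pose proof (Hp i Hi). nra. }
  pose proof (fsum_weighted_mean_sq_le (qN Q) p (fun i => l i + z (l i))
                (fun i Hi => Rlt_le _ _ (Hp i Hi)) Hsum) as HE2. cbv beta in HE2. fold E1 in HE2.
  assert (E1 / 2 <= fsum (qN Q) (fun i => p i * (l i + z (l i)) ^ 2) / (2 * E1)).
  { apply (Rmult_le_reg_r (2 * E1)); [lra |].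
    replace (fsum (qN Q) (fun i => p i * (l i + z (l i)) ^ 2) / (2 * E1) * (2 * E1))
      with (fsum (qN Q) (fun i => p i * (l i + z (l i)) ^ 2)) by (field; lra).
    replace (E1 / 2 * (2 * E1)) with (E1 ^ 2) by field. exact HE2. }
  lra.
Qed.

Lemma AoI_ge_entropy W z Q l : valid_quantizer a b Q -> valid_code Q l -> valid_policy W z ->
  3 / 2 * (quant_entropy f Q / ln 2) <= AoI f z Q l.
Proof.
  intros hQ hl Hz. pose proof ln2_pos.
  pose proof (AoI_ge_expected_length W z Q l hQ hl Hz).
  pose proof (entropy_le_kraft (qN Q) (cell_prob f Q) l (cell_prob_pos f a b Q hA hQ)
                (fsum_cell_prob f a b Q hA hQ) (proj2 hl)) as HK.
  fold (quant_entropy f Q) in HK.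
  assert (quant_entropy f Q / ln 2 <= fsum (qN Q) (fun i => cell_prob f Q i * l i)).
  { apply (Rmult_le_reg_r (ln 2)); [lra |]. replace (quant_entropy f Q / ln 2 * ln 2)
      with (quant_entropy f Q) by (field; lra). lra. }
  lra.
Qed.

Lemma shifted_shannon_code_valid Q s : valid_quantizer a b Q -> 0 <= s ->
  (forall i, (i < qN Q)%nat -> 0 < s - log2 (cell_prob f Q i)) ->
  valid_code Q (fun i => s - log2 (cell_prob f Q i)).
Proof.
  intros hQ Hs Hl. split; [exact Hl |].
  rewrite (fsum_ext _ _ (fun i => Rpower 2 (- s) * cell_prob f Q i)).
  - rewrite fsum_scal, (fsum_cell_prob f a b Q hA hQ), Rmult_1_r.
    rewrite <- Rpower_O with (x := 2) by lra. apply Rle_Rpower; lra.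
  - intros i Hi.
    replace (- (s - log2 (cell_prob f Q i))) with (- s + log2 (cell_prob f Q i)) by ring.
    rewrite Rpower_plus, Rpower_2_log2 by (apply (cell_prob_pos f a b Q hA hQ i Hi)). reflexivity.
Qed.

Lemma AoI_opt_ge_entropy W z Q : valid_policy W z -> valid_quantizer a b Q ->
  3 / 2 * (quant_entropy f Q / ln 2) <= AoI_opt f z Q.
Proof.
  intros Hz hQ.
  assert (hl : valid_code Q (fun i => 1 - log2 (cell_prob f Q i))).
  { apply shifted_shannon_code_valid; [auto | lra |]. intros i Hi.
    pose proof (ln_nonpos _ (cell_prob_pos f a b Q hA hQ i Hi) (cell_prob_le_1 f a b Q hA hQ i Hi)).
    assert (log2 (cell_prob f Q i) <= 0)
      by (unfold log2, Rdiv; apply Rmult_le_0_r; [lra | apply Rlt_le, Rinv_0_lt_compat, ln2_pos]).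
    lra. }
  apply (inf_R_bounds _ (AoI f z Q (fun i => 1 - log2 (cell_prob f Q i)))); [eauto |].
  intros y [l [Hl ->]]. apply (AoI_ge_entropy W); auto.
Qed.

Lemma AoI_joint_opt_bounds W delta c : 0 <= W -> 0 < delta ->
  (forall Q, valid_quantizer a b Q -> distortion f Q <= distortion f (Q_uni a b delta) ->
     c <= 3 / 2 * (quant_entropy f Q / ln 2)) ->
  c <= AoI_joint_opt f a b W (distortion f (Q_uni a b delta))
    <= AoI_opt f zero_wait (Q_uni a b delta).
Proof.
  intros HW Hd Hc. pose proof (support_lt f a b hA) as Hab.
  set (D := distortion f (Q_uni a b delta)).
  set (inner z := inf_R (fun v => exists Q, valid_quantizer a b Q /\ distortion f Q <= D /\
                                         v = AoI_opt f z Q)).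
  assert (Hinner : forall z, valid_policy W z -> c <= inner z <= AoI_opt f z (Q_uni a b delta)).
  { intros z Hz. apply inf_R_bounds.
    - exists (Q_uni a b delta).
      split; [apply Q_uni_valid; lra | split; [apply Rle_refl | reflexivity]].
    - intros y [Q [hQ [HQ ->]]]. apply Rle_trans with (3 / 2 * (quant_entropy f Q / ln 2)).
      + apply Hc; auto.
      + apply (AoI_opt_ge_entropy W); auto. }
  assert (Hz0 : valid_policy W zero_wait) by (intros x _; unfold zero_wait; lra).
  destruct (inf_R_bounds (fun u => exists z, valid_policy W z /\ u = inner z) (inner zero_wait) c)
    as [H1 H2]; [eauto | intros y [z [Hz ->]]; apply Hinner; auto |].
  split; [exact H1 |]. apply (Rle_trans _ _ _ H2), Hinner, Hz0.
Qed.

End AoIBounds.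

Definition uni_code_spread (a b M : R) : R := (b - a + 1) * (4 + M * ln M ^ 2) / ln 2 ^ 2.

Section UniformCode.
Variables (f : R -> R) (a b delta M : R).
Hypothesis hA : condA f a b.
Hypotheses (Hd : 0 < delta) (Hd1 : delta <= 1) (HM1 : 1 <= M) (HM : forall x, f x <= M).
Hypothesis HMd : M * delta < 1.

Let Q := Q_uni a b delta.
Let p := cell_prob f Q.

Let hQ : valid_quantizer a b Q := Q_uni_valid a b delta (support_lt f a b hA) Hd.

Lemma shannon_uni_code_valid : valid_code Q (fun i => 0 - log2 (p i)).
Proof.
  apply (shifted_shannon_code_valid f a b hA); [apply hQ | lra |]. intros i Hi. fold p.
  pose proof (cell_prob_pos f a b Q hA hQ i Hi) as Hp.
  pose proof (uni_cell_prob_le f a b hA delta M i Hd HM Hi) as HpM. fold Q p in Hp, HpM.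
  assert (ln (p i) < 0) by (rewrite <- ln_1; apply ln_increasing; lra).
  assert (log2 (p i) < 0) by (apply Rmult_neg_pos; [lra | apply Rinv_0_lt_compat, ln2_pos]).
  lra.
Qed.

Lemma shannon_uni_expected_length :
  fsum (qN Q) (fun i => p i * (0 - log2 (p i))) = quant_entropy f Q / ln 2.
Proof.
  unfold quant_entropy, Rdiv. rewrite Rmult_comm, <- fsum_scal. apply fsum_ext.
  intros i _. unfold log2, p. pose proof ln2_pos. field. lra.
Qed.

Lemma shannon_uni_length_spread :
  fsum (qN Q) (fun i => p i * ((0 - log2 (p i)) - - log2 delta) ^ 2) <= uni_code_spread a b M.
Proof.
  pose proof ln2_pos. pose proof (support_lt f a b hA).
  set (B := 4 + M * ln M ^ 2).
  apply Rle_trans with (fsum (qN Q) (fun _ => delta * B / ln 2 ^ 2)).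
  - apply fsum_le. intros i Hi.
    pose proof (cell_prob_pos f a b Q hA hQ i Hi) as Hp.
    pose proof (uni_cell_prob_le f a b hA delta M i Hd HM Hi) as HpM. fold Q p in Hp, HpM.
    set (t := p i / delta).
    assert (Ht : 0 < t <= M).
    { split; [apply Rdiv_lt_0_compat; lra |].
      apply (Rmult_le_reg_r delta); [lra |]. unfold t.
      replace (p i / delta * delta) with (p i) by (field; lra).
      lra. }
    replace (p i * ((0 - log2 (p i)) - - log2 delta) ^ 2) with (delta * (t * ln t ^ 2) / ln 2 ^ 2)
      by (unfold t, log2; rewrite ln_div by lra; field; lra).
    unfold Rdiv. apply Rmult_le_compat_r; [apply Rlt_le, Rinv_0_lt_compat, pow_lt; lra |].
    apply Rmult_le_compat_l; [lra | apply mul_ln_sq_le; auto].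
  - rewrite fsum_const. destruct (uni_cells_count a b delta ltac:(lra) Hd) as [[_ HN] _].
    unfold uni_code_spread. fold B.
    assert (0 <= B) by (pose proof (pow2_ge_0 (ln M)); unfold B; nra).
    assert (0 < ln 2 ^ 2) by (apply pow_lt; lra).
    unfold Rdiv. rewrite <- Rmult_assoc, <- Rmult_assoc.
    apply Rmult_le_compat_r; [apply Rlt_le, Rinv_0_lt_compat; lra |].
    apply Rmult_le_compat_r; [lra |]. fold Q in HN. lra.
Qed.

Lemma AoI_opt_uni_le :
  AoI_opt f zero_wait Q
  <= 3 / 2 * (quant_entropy f Q / ln 2) + uni_code_spread a b M / (2 * (quant_entropy f Q / ln 2)).
Proof.
  pose proof ln2_pos. set (l := fun i => 0 - log2 (p i)).
  set (E := quant_entropy f Q / ln 2).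
  assert (HE : 0 < E).
  { pose proof (quant_entropy_uni_ge f a b hA delta M Hd HM). fold Q in H0.
    assert (ln (M * delta) < 0) by (rewrite <- ln_1; apply ln_increasing; nra).
    apply Rdiv_lt_0_compat; lra. }
  destruct (inf_R_bounds (fun v => exists l0, valid_code Q l0 /\ v = AoI f zero_wait Q l0)
              (AoI f zero_wait Q l) (3 / 2 * E)) as [_ Hinf].
  { exists l. split; [apply shannon_uni_code_valid | reflexivity]. }
  { intros y [l0 [Hl0 ->]]. apply (AoI_ge_entropy f a b hA 0); auto using hQ.
    intros x _. unfold zero_wait. lra. }
  apply (Rle_trans _ _ _ Hinf). unfold AoI. cbv zeta. fold p.
  assert (HE1 : fsum (qN Q) (fun i => p i * (l i + zero_wait (l i))) = E).
  { unfold E. rewrite <- shannon_uni_expected_length.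
    apply fsum_ext. intros. unfold zero_wait, l. ring. }
  assert (HE2 : fsum (qN Q) (fun i => p i * (l i + zero_wait (l i)) ^ 2)
                <= E ^ 2 + uni_code_spread a b M).
  { pose proof (fsum_weighted_sq_le (qN Q) p l (- log2 delta) (fsum_cell_prob f a b Q hA hQ))
      as Hsq.
    unfold l in Hsq at 2. rewrite shannon_uni_expected_length in Hsq. fold E in Hsq.
    pose proof shannon_uni_length_spread as Hspread.
    change (fsum (qN Q) (fun i => p i * (l i - - log2 delta) ^ 2) <= uni_code_spread a b M)
      in Hspread.
    rewrite (fsum_ext _ _ (fun i => p i * l i ^ 2)) by (intros; unfold zero_wait; f_equal; ring).
    lra. }
  rewrite HE1. replace (fsum (qN Q) (fun i => p i * l i)) with E by (rewrite <- HE1; apply fsum_ext;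
    intros; unfold zero_wait; ring).
  assert (fsum (qN Q) (fun i => p i * (l i + zero_wait (l i)) ^ 2) / (2 * E)
          <= (E ^ 2 + uni_code_spread a b M) / (2 * E))
    by (apply Rmult_le_compat_r; [apply Rlt_le, Rinv_0_lt_compat |]; lra).
  replace ((E ^ 2 + uni_code_spread a b M) / (2 * E)) with (E / 2 + uni_code_spread a b M / (2 * E))
    in H0 by (field; lra).
  lra.
Qed.

End UniformCode.

Lemma uni_code_spread_nonneg a b M : a < b -> 1 <= M -> 0 <= uni_code_spread a b M.
Proof.
  intros Hab HM. unfold uni_code_spread. pose proof ln2_pos.
  assert (0 <= M * ln M ^ 2) by (apply Rmult_le_pos; [lra | apply pow2_ge_0]).
  apply Rmult_le_pos; [apply Rmult_le_pos; lra | apply Rlt_le, Rinv_0_lt_compat, pow_lt; lra].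
Qed.

Lemma AoI_gap_small (f : R -> R) (a b W eps : R) : condA f a b -> condB f a b -> 0 <= W ->
  0 < eps -> at_right 0 (fun delta =>
    0 <= AoI_opt f zero_wait (Q_uni a b delta)
         - AoI_joint_opt f a b W (distortion f (Q_uni a b delta)) < eps).
Proof.
  intros hA hB hW Heps. pose proof ln2_pos. pose proof (support_lt f a b hA).
  destruct (density_bounded f a b hA) as [M [HM1 HM]].
  set (K := uni_code_spread a b M). assert (HK : 0 <= K) by (apply uni_code_spread_nonneg; lra).
  set (e := eps * ln 2 / 3). assert (He : 0 < e) by (apply Rdiv_lt_0_compat; nra).
  set (Z := K * ln 2 / eps + 1).
  assert (HZ : K * ln 2 < eps * Z) by (unfold Z; field_simplify; nra).
  assert (Hd0 : 0 < / (2 * M)) by (apply Rinv_0_lt_compat; lra).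
  generalize (filter_and _ _ (quant_entropy_uni_near_opt f a b hA hB e He)
               (filter_and _ _ (quant_entropy_uni_large f a b hA Z)
                 (at_right_0_intro _ _ Hd0 (fun x Hx => Hx)))).
  apply filter_imp. intros delta [Hopt [HH [Hd Hdd]]].
  assert (HMd : M * delta <= / 2).
  { replace (/ 2) with (M * / (2 * M)) by (field; lra). apply Rmult_le_compat_l; lra. }
  set (ent := quant_entropy f (Q_uni a b delta)) in *.
  destruct (AoI_joint_opt_bounds f a b hA W delta (3 / 2 * ((ent - e) / ln 2)) hW Hd) as [Hlow Hup].
  { intros Q hQ HQ. specialize (Hopt Q hQ HQ).
    apply Rmult_le_compat_l; [lra |].
    apply Rmult_le_compat_r; [apply Rlt_le, Rinv_0_lt_compat |]; lra. }
  pose proof (AoI_opt_uni_le f a b delta M hA Hd ltac:(nra) HM1 HM ltac:(lra)) as HAoI.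
  fold K ent in HAoI.
  assert (HZ0 : 0 < Z)
    by (unfold Z; assert (0 <= K * ln 2 / eps) by (apply Rdiv_le_0_compat; nra); lra).
  assert (Hspread : K / (2 * (ent / ln 2)) < eps / 2).
  { replace (K / (2 * (ent / ln 2))) with (K * ln 2 / (2 * ent)) by (field; split; lra).
    apply (Rmult_lt_reg_r (2 * ent)); [lra |].
    replace (K * ln 2 / (2 * ent) * (2 * ent)) with (K * ln 2) by (field; lra). nra. }
  assert (3 / 2 * (ent / ln 2) - 3 / 2 * ((ent - e) / ln 2) = eps / 2) by (unfold e; field; lra).
  split; lra.
Qed.

Theorem theorem1 (f : R -> R) (a b W : R) :
  condA f a b -> condB f a b -> 0 <= W ->
  filterlim
    (fun delta =>
       AoI_opt f zero_wait (Q_uni a b delta)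
       - AoI_joint_opt f a b W (distortion f (Q_uni a b delta)))
    (at_right 0) (locally 0).
Proof.
  intros hA hB hW. apply filterlim_locally. intros eps.
  generalize (AoI_gap_small f a b W eps hA hB hW (cond_pos eps)).
  apply filter_imp. intros delta Hgap. rewrite ball_R_iff, Rabs_lt_between. lra.
Qed.
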